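(* Suppose $n$ is even. Let $\ell$ be the smallest integer $\ge0$ such that $a_{\ell+1}\neq0$, and let $\lambda:=[\ell/2]$. Then the $n/2$ functions $J_1,\dots,J_\lambda,\ H,\ F_{\lambda+1},F_{\lambda+2},\dots,F_{n/2-1}$ are pairwise in involution with respect to $\{\cdot,\cdot\}$ and functionally independent (their differentials are linearly independent on a dense open subset of $\mathbb R^n$). Hence they define a Liouville integrable system on $(\mathbb R^n,\{\cdot,\cdot\})$.
   Context: Let $n\ge1$, $(a_1,\dots,a_n)\in\mathbb R^n\setminus\{0\}$. On $\mathbb R^n$ with coordinates $x_1,\dots,x_n$ consider the Poisson bracket $\{x_i,x_j\}=x_ix_j$ for $1\le i<j\le n$ (extended by skew-symmetry and the Leibniz rule; rational functions are considered on the open dense set where their denominators do not vanish); for $n$ even it has rank $n$. Let $H=a_1x_1+\dots+a_nx_n$, $v_0:=0$ and $v_i:=a_1x_1+\dots+a_ix_i$ for $i=1,\dots,n$. For $k=1,\dots,[n/2]$ let $J_k:=\dfrac{x_1x_3\cdots x_{2k-1}}{x_2x_4\cdots x_{2k}}$. For $n$ even and $k=1,\dots,n/2$ let $F_k:=v_{2k}\dfrac{x_{2k+2}x_{2k+4}\cdots x_n}{x_{2k+1}x_{2k+3}\cdots x_{n-1}}$ (empty product $=1$, so $F_{n/2}=H$). *)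

From Stdlib Require Import Reals Lra Lia Arith.
Open Scope R_scope.

(* Points of R^n are x : nat -> R; only coordinates x 1, ..., x n matter
   (1-indexed as in the paper). *)

Fixpoint sumto (f : nat -> R) (k : nat) : R :=
  match k with O => 0 | S k' => sumto f k' + f (S k') end.

(* prod_btw g lo hi = product of g i for lo < i <= hi *)
Fixpoint prod_btw (g : nat -> R) (lo hi : nat) : R :=
  match hi with
  | O => 1
  | S h => prod_btw g lo h * (if Nat.ltb lo (S h) then g (S h) else 1)
  end.

Definition v (a : nat -> R) (i : nat) (x : nat -> R) : R :=
  sumto (fun j => a j * x j) i.
Definition Hf (n : nat) (a : nat -> R) (x : nat -> R) : R := v a n x.

Definition J (k : nat) (x : nat -> R) : R :=
  prod_btw (fun i => x (2 * i - 1)%nat) 0 k / prod_btw (fun i => x (2 * i)%nat) 0 k.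

(* For n = 2m: F_k = v_{2k} (x_{2k+2} ... x_n) / (x_{2k+1} ... x_{n-1}) *)
Definition F (m : nat) (a : nat -> R) (k : nat) (x : nat -> R) : R :=
  v a (2 * k) x * prod_btw (fun i => x (2 * i)%nat) k m
    / prod_btw (fun i => x (2 * i - 1)%nat) k m.

(* The family  J_1..J_lam, H, F_{lam+1}..F_{m-1}, indexed by k = 0..m-1 *)
Definition fam (m : nat) (a : nat -> R) (lam k : nat) : (nat -> R) -> R :=
  if Nat.ltb k lam then J (S k)
  else if Nat.eqb k lam then Hf (2 * m) a
  else F m a k.

Definition upd (x : nat -> R) (i : nat) (t : R) : nat -> R :=
  fun j => if Nat.eqb j i then t else x j.

Definition is_grad (n : nat) (f : (nat -> R) -> R) (x : nat -> R) (g : nat -> R) : Prop :=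
  forall i, (1 <= i <= n)%nat -> derivable_pt_lim (fun t => f (upd x i t)) (x i) (g i).

(* Poisson bracket {x_i,x_j} = x_i x_j (i<j):
   {f,g}(x) = sum_{i<j} x_i x_j (d_i f d_j g - d_j f d_i g) *)
Definition bracket (n : nat) (x : nat -> R) (df dg : nat -> R) : R :=
  sumto (fun j => sumto (fun i => x i * x j * (df i * dg j - df j * dg i)) (j - 1)) n.

(* open set where all coordinates are nonzero (all denominators nonzero) *)
Definition torus (n : nat) (x : nat -> R) : Prop :=
  forall i, (1 <= i <= n)%nat -> x i <> 0.

Definition close (n : nat) (eps : R) (x y : nat -> R) : Prop :=
  forall i, (1 <= i <= n)%nat -> Rabs (y i - x i) < eps.

Definition openR (n : nat) (U : (nat -> R) -> Prop) : Prop :=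
  forall x, U x -> exists eps, 0 < eps /\ forall y, close n eps x y -> U y.

Definition denseR (n : nat) (U : (nat -> R) -> Prop) : Prop :=
  forall x eps, 0 < eps -> exists y, U y /\ close n eps x y.

Definition lin_indep (n m : nat) (gs : nat -> nat -> R) : Prop :=
  forall c : nat -> R,
    (forall i, (1 <= i <= n)%nat -> sumto (fun k => c (k - 1)%nat * gs (k - 1)%nat i) m = 0) ->
    forall k, (k < m)%nat -> c k = 0.

(* On the torus x_1 ... x_n <> 0 put u_i = x_i d_i f.  The bracket {x_i, x_j} = x_i x_j becomes
   the constant skew form w(u, u') = sum_(i<j) (u_i u'_j - u_j u'_i), which in terms of prefix
   sums U, U' equals sum_j u'_j (U_(j-1) + U_j) - U_n U'_n.  Up to a nonvanishing factor, u is
   the sign pattern (1, -1, ..., 1, -1, 0, ..., 0) of length 2k for J_k, (a_i x_i)_i for H, and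
   (a_1 x_1, ..., a_2k x_2k, -v_2k, v_2k, ..., -v_2k, v_2k) for F_k.  All prefix sums are explicit,
   and the brackets vanish by the telescoping identity sum_(j<=p) a_j x_j (v_(j-1) + v_j) = v_p^2
   together with v_p = 0 for p <= l.  For independence, the prefix sums of a vanishing linear
   combination at suitable positions form a triangular system whose pivots are 1 or some v_p with
   p > l; as a_(l+1) <> 0, these v_p are nonzero on a dense open set. *)

From Stdlib Require Import Reals Lra Lia Arith FunctionalExtensionality.
From Coquelicot Require Import Coquelicot.
Open Scope R_scope.

Variant parity_spec (n : nat) : bool -> Prop :=
  | ParityEven k : n = (2 * k)%nat -> parity_spec n true
  | ParityOdd k : n = S (2 * k) -> parity_spec n false.

Lemma parityP n : parity_spec n (Nat.even n).
Proof.
  destruct (Nat.even n) eqn:E.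
  - apply Nat.even_spec in E as [k Hk]. exact (ParityEven n k Hk).
  - assert (Ho : Nat.odd n = true) by (rewrite <- Nat.negb_even, E; reflexivity).
    apply Nat.odd_spec in Ho as [k Hk]. apply (ParityOdd n k). lia.
Qed.

Ltac nat_cases :=
  repeat match goal with
  | |- context [Nat.ltb ?p ?q] => destruct (Nat.ltb_spec p q)
  | |- context [Nat.leb ?p ?q] => destruct (Nat.leb_spec p q)
  | |- context [Nat.eqb ?p ?q] => destruct (Nat.eqb_spec p q)
  | |- context [Nat.even ?p] => destruct (parityP p)
  end; cbn [andb orb negb]; try lia; try reflexivity.

Lemma sumto_S f k : sumto f (S k) = sumto f k + f (S k).
Proof. reflexivity. Qed.

Lemma sumto_ext f g k :
  (forall i, (1 <= i <= k)%nat -> f i = g i) -> sumto f k = sumto g k.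
Proof.
  induction k as [|k IH]; intros Hfg; [reflexivity|].
  rewrite !sumto_S, Hfg by lia. f_equal. apply IH. intros i Hi. apply Hfg. lia.
Qed.

Lemma sumto_plus f g k : sumto (fun i => f i + g i) k = sumto f k + sumto g k.
Proof. induction k as [|k IH]; simpl; [ring | rewrite IH; ring]. Qed.

Lemma sumto_scal c f k : sumto (fun i => c * f i) k = c * sumto f k.
Proof. induction k as [|k IH]; simpl; [ring | rewrite IH; ring]. Qed.

Lemma sumto_zero k : sumto (fun _ => 0) k = 0.
Proof. induction k as [|k IH]; simpl; [ring | rewrite IH; ring]. Qed.

Lemma sumto_swap (G : nat -> nat -> R) N M :
  sumto (fun j => sumto (G j) M) N = sumto (fun k => sumto (fun j => G j k) N) M.
Proof.
  induction N as [|N IH]; simpl.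
  - symmetry. apply sumto_zero.
  - rewrite IH, <- sumto_plus. reflexivity.
Qed.

Lemma sumto_tail_const f w c p n : (p <= n)%nat ->
  (forall j, (p < j <= n)%nat -> f j = c * w j) ->
  sumto f n = sumto f p + c * (sumto w n - sumto w p).
Proof.
  induction n as [|n IH]; intros Hpn Hf.
  - replace p with 0%nat by lia. simpl. ring.
  - destruct (Nat.eq_dec p (S n)) as [->|Hne]; [ring|].
    rewrite !sumto_S, IH, Hf by (lia || (intros; apply Hf; lia)). ring.
Qed.

(* In the coordinates [u_i = x_i d_i f] the quadratic bracket becomes this constant skew form. *)
Definition skew (n : nat) (u w : nat -> R) : R :=
  sumto (fun j => sumto (fun i => u i * w j - u j * w i) (j - 1)) n.

Lemma bracket_skew n x g h :
  bracket n x g h = skew n (fun i => x i * g i) (fun i => x i * h i).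
Proof. apply sumto_ext; intros j _. apply sumto_ext; intros i _. ring. Qed.

Lemma skew_ext n u w u' w' :
  (forall i, (1 <= i <= n)%nat -> u i = u' i) -> (forall i, (1 <= i <= n)%nat -> w i = w' i) ->
  skew n u w = skew n u' w'.
Proof.
  intros Hu Hw. apply sumto_ext; intros j Hj. apply sumto_ext; intros i Hi.
  rewrite !Hu, !Hw by lia. reflexivity.
Qed.

Lemma skew_scal n c d u w :
  skew n (fun i => c * u i) (fun i => d * w i) = c * d * skew n u w.
Proof.
  unfold skew. rewrite <- sumto_scal. apply sumto_ext; intros j _.
  rewrite <- sumto_scal. apply sumto_ext; intros i _. ring.
Qed.

Lemma skew_antisym n u w : skew n u w = - skew n w u.
Proof.
  replace (- skew n w u) with (-1 * skew n w u) by ring.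
  unfold skew. rewrite <- sumto_scal. apply sumto_ext; intros j _.
  rewrite <- sumto_scal. apply sumto_ext; intros i _. ring.
Qed.

Lemma skew_prefix n u w :
  skew n u w = sumto (fun j => w j * (sumto u (j - 1) + sumto u j)) n - sumto u n * sumto w n.
Proof.
  induction n as [|n IH]; [unfold skew; simpl; ring|].
  unfold skew in *. rewrite !sumto_S, IH. replace (S n - 1)%nat with n by lia.
  rewrite (sumto_ext (fun i => u i * w (S n) - u (S n) * w i)
             (fun i => w (S n) * u i + - u (S n) * w i)) by (intros; ring).
  rewrite sumto_plus, !sumto_scal. ring.
Qed.

Lemma skew_prefix_tail n u w p c : (p <= n)%nat ->
  (forall j, (p < j <= n)%nat -> sumto u (j - 1) + sumto u j = c) -> sumto u n = c ->
  skew n u w = sumto (fun j => w j * (sumto u (j - 1) + sumto u j)) p - c * sumto w p.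
Proof.
  intros Hpn Htail Hn. rewrite skew_prefix, (sumto_tail_const _ w c p n) by
    (auto; intros j Hj; rewrite Htail by lia; ring).
  rewrite Hn. ring.
Qed.

(* [x_i d_i] applied to J_k, H and F_k gives (up to a nonvanishing factor) these vectors. *)
Definition alt_sign (k i : nat) : R :=
  if Nat.leb i (2 * k) then (if Nat.even i then -1 else 1) else 0.

Definition logH (a x : nat -> R) (i : nat) : R := a i * x i.

Definition logF (a : nat -> R) (k : nat) (x : nat -> R) (i : nat) : R :=
  if Nat.leb i (2 * k) then a i * x i
  else if Nat.even i then v a (2 * k) x else - v a (2 * k) x.

Lemma v_S a j x : v a (S j) x = v a j x + a (S j) * x (S j).
Proof. reflexivity. Qed.

Lemma sumto_logH a x p : sumto (logH a x) p = v a p x.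
Proof. reflexivity. Qed.

Lemma sumto_alt_sign k p :
  sumto (alt_sign k) p = if (Nat.ltb p (2 * k) && negb (Nat.even p))%bool then 1 else 0.
Proof.
  induction p as [|p IH]; [cbn [sumto Nat.even negb]; now rewrite Bool.andb_false_r|].
  rewrite sumto_S, IH. unfold alt_sign. nat_cases; ring.
Qed.

Lemma sumto_logF a k x p :
  sumto (logF a k x) p =
  if Nat.leb p (2 * k) then v a p x else if Nat.even p then v a (2 * k) x else 0.
Proof.
  induction p as [|p IH]; [reflexivity|].
  rewrite sumto_S, IH, v_S. unfold logF.
  nat_cases; try (replace p with (2 * k)%nat by lia); ring.
Qed.

Lemma skew_alt_sign n k w : (2 * k <= n)%nat -> skew n (alt_sign k) w = sumto w (2 * k).
Proof.
  intros Hk. rewrite (skew_prefix_tail n _ w (2 * k) 0); auto.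
  - rewrite Rmult_0_l, Rminus_0_r. apply sumto_ext; intros j Hj.
    rewrite !sumto_alt_sign. nat_cases; ring.
  - intros j Hj. rewrite !sumto_alt_sign. nat_cases; ring.
  - rewrite sumto_alt_sign. nat_cases.
Qed.

Lemma skew_logF m a k x w : (k <= m)%nat ->
  skew (2 * m) (logF a k x) w =
  sumto (fun j => w j * (v a (j - 1) x + v a j x)) (2 * k) - v a (2 * k) x * sumto w (2 * k).
Proof.
  intros Hk. rewrite (skew_prefix_tail _ _ w (2 * k) (v a (2 * k) x)); [| lia | |].
  - f_equal. apply sumto_ext; intros j Hj. rewrite !sumto_logF. nat_cases.
  - intros j Hj. rewrite !sumto_logF.
    nat_cases; try (replace (j - 1)%nat with (2 * k)%nat by lia); ring.
  - rewrite sumto_logF. nat_cases. replace m with k by lia. reflexivity.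
Qed.

Lemma sumto_telescope_v a x p :
  sumto (fun j => a j * x j * (v a (j - 1) x + v a j x)) p = v a p x * v a p x.
Proof.
  induction p as [|p IH]; [unfold v; simpl; ring|].
  rewrite sumto_S, IH, v_S. replace (S p - 1)%nat with p by lia. ring.
Qed.

Lemma v_vanish a x l p :
  (forall i, (1 <= i <= l)%nat -> a i = 0) -> (p <= l)%nat -> v a p x = 0.
Proof.
  intros Hz. induction p as [|p IH]; intros Hp; [reflexivity|].
  rewrite v_S, IH, Hz by lia. ring.
Qed.

Lemma skew_logF_logF m a x k k' : (k <= k' <= m)%nat ->
  skew (2 * m) (logF a k x) (logF a k' x) = 0.
Proof.
  intros Hk. rewrite skew_logF, sumto_logF by lia.
  rewrite (sumto_ext _ (fun j => a j * x j * (v a (j - 1) x + v a j x))), sumto_telescope_v.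
  - nat_cases; ring.
  - intros j Hj. unfold logF. nat_cases.
Qed.

Lemma skew_logF_logH m a x k : (k <= m)%nat -> skew (2 * m) (logF a k x) (logH a x) = 0.
Proof.
  intros Hk. rewrite skew_logF, sumto_logH by lia. unfold logH.
  rewrite sumto_telescope_v. ring.
Qed.

Definition log_dir (a : nat -> R) (lam k : nat) (x : nat -> R) : nat -> R :=
  if Nat.ltb k lam then alt_sign (S k) else if Nat.eqb k lam then logH a x else logF a k x.

Section Involution.

Variables (m l lam : nat) (a x : nat -> R).
Hypothesis a_prefix0 : forall i, (1 <= i <= l)%nat -> a i = 0.
Hypothesis lam_l : (2 * lam <= l)%nat.

Lemma skew_log_dir_ordered k1 k2 : (k1 <= k2 < m)%nat ->
  skew (2 * m) (log_dir a lam k1 x) (log_dir a lam k2 x) = 0.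
Proof.
  intros Hk. unfold log_dir at 1. destruct (Nat.ltb_spec k1 lam).
  - rewrite skew_alt_sign by lia. unfold log_dir.
    destruct (Nat.ltb_spec k2 lam); [rewrite sumto_alt_sign; nat_cases|].
    destruct (Nat.eqb_spec k2 lam); [rewrite sumto_logH | rewrite sumto_logF; nat_cases];
      apply (v_vanish a x l); auto; lia.
  - unfold log_dir. destruct (Nat.ltb_spec k2 lam); [lia|].
    destruct (Nat.eqb_spec k1 lam), (Nat.eqb_spec k2 lam); try lia.
    + pose proof (skew_antisym (2 * m) (logH a x) (logH a x)). lra.
    + rewrite skew_antisym, skew_logF_logH by lia. ring.
    + apply skew_logF_logF. lia.
Qed.

Lemma skew_log_dir k1 k2 : (k1 < m)%nat -> (k2 < m)%nat ->
  skew (2 * m) (log_dir a lam k1 x) (log_dir a lam k2 x) = 0.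
Proof.
  intros Hk1 Hk2. destruct (Nat.le_gt_cases k1 k2).
  - apply skew_log_dir_ordered. lia.
  - rewrite skew_antisym, skew_log_dir_ordered by lia. ring.
Qed.

End Involution.

Lemma log_deriv_affine_monomial (phi : R -> R) p q C (e f : nat) x0 :
  x0 <> 0 -> (forall t, phi t = (p + q * t) * C * t ^ e / t ^ f) ->
  exists L, derivable_pt_lim phi x0 L /\
            x0 * L = q * x0 * (C * x0 ^ e / x0 ^ f) + (INR e - INR f) * phi x0.
Proof.
  intros Hx Hphi.
  assert (Ephi : phi = fun t => (p + q * t) * C * t ^ e / t ^ f)
    by (apply functional_extensionality; auto).
  subst phi.
  eexists; split.
  - apply is_derive_Reals. auto_derive; [apply pow_nonzero; auto | reflexivity].
  - assert (x0 ^ f <> 0) by (apply pow_nonzero; auto).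
    destruct e as [|e], f as [|f]; simpl pred; rewrite ?S_INR; simpl INR; simpl pow; field;
      try (split; [apply pow_nonzero|]; auto).
Qed.

Fixpoint occurrences (h : nat -> nat) (i lo hi : nat) : nat :=
  match hi with
  | O => O
  | S hi' => (occurrences h i lo hi'
              + if (Nat.ltb lo (S hi') && Nat.eqb (h (S hi')) i)%bool then 1 else 0)%nat
  end.

Lemma prod_btw_upd x i t h lo hi :
  prod_btw (fun j => upd x i t (h j)) lo hi =
  prod_btw (fun j => upd x i 1 (h j)) lo hi * t ^ occurrences h i lo hi.
Proof.
  induction hi as [|hi IH]; [simpl; ring|].
  cbn [prod_btw occurrences]. rewrite IH, pow_add. unfold upd. nat_cases; simpl; ring.
Qed.

Lemma occurrences_even i lo hi :
  occurrences (fun j => 2 * j)%nat i lo hi =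
  if (Nat.even i && Nat.ltb (2 * lo) i && Nat.leb i (2 * hi))%bool then 1%nat else 0%nat.
Proof. induction hi as [|hi IH]; cbn [occurrences]; [|rewrite IH]; nat_cases. Qed.

Lemma occurrences_odd i lo hi :
  occurrences (fun j => 2 * j - 1)%nat i lo hi =
  if (negb (Nat.even i) && Nat.ltb (2 * lo) i && Nat.leb i (2 * hi))%bool then 1%nat else 0%nat.
Proof. induction hi as [|hi IH]; cbn [occurrences]; [|rewrite IH]; nat_cases. Qed.

Lemma v_upd a j x i t : (1 <= i)%nat ->
  v a j (upd x i t) = v a j (upd x i 0) + (if Nat.leb i j then a i * t else 0).
Proof.
  intros Hi. induction j as [|j IH]; [unfold v; simpl; nat_cases; ring|].
  rewrite !v_S, IH. unfold upd. nat_cases; try subst i; ring.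
Qed.

Lemma upd_same x i : upd x i (x i) = x.
Proof.
  apply functional_extensionality; intros j. unfold upd.
  destruct (Nat.eqb_spec j i); subst; reflexivity.
Qed.

Lemma J_log_deriv k x i : (1 <= i)%nat -> x i <> 0 ->
  exists L, derivable_pt_lim (fun t => J k (upd x i t)) (x i) L /\
            x i * L = J k x * alt_sign k i.
Proof.
  intros Hi Hx.
  destruct (log_deriv_affine_monomial (fun t => J k (upd x i t)) 1 0
     (prod_btw (fun j => upd x i 1 (2 * j - 1)%nat) 0 k /
      prod_btw (fun j => upd x i 1 (2 * j)%nat) 0 k)
     (occurrences (fun j => 2 * j - 1)%nat i 0 k) (occurrences (fun j => 2 * j)%nat i 0 k) (x i))
    as [L [HL HxL]]; auto.
  { intros t. unfold J.
    rewrite (prod_btw_upd x i t (fun j => 2 * j - 1)%nat),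
            (prod_btw_upd x i t (fun j => 2 * j)%nat).
    unfold Rdiv. rewrite !Rinv_mult. ring. }
  exists L. split; auto.
  rewrite HxL, upd_same, occurrences_odd, occurrences_even. unfold alt_sign.
  nat_cases; simpl INR; ring.
Qed.

Lemma H_log_deriv n a x i : (1 <= i <= n)%nat -> x i <> 0 ->
  exists L, derivable_pt_lim (fun t => Hf n a (upd x i t)) (x i) L /\ x i * L = logH a x i.
Proof.
  intros Hi Hx.
  destruct (log_deriv_affine_monomial (fun t => Hf n a (upd x i t))
              (v a n (upd x i 0)) (a i) 1 0 0 (x i))
    as [L [HL HxL]]; auto.
  { intros t. unfold Hf. rewrite v_upd by lia. nat_cases. simpl. field. }
  exists L. split; auto. rewrite HxL. unfold logH. simpl. field.
Qed.

Definition ratioF (m k : nat) (x : nat -> R) : R :=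
  prod_btw (fun j => x (2 * j)%nat) k m / prod_btw (fun j => x (2 * j - 1)%nat) k m.

Lemma F_ratio m a k x : F m a k x = v a (2 * k) x * ratioF m k x.
Proof. unfold F, ratioF, Rdiv. ring. Qed.

Lemma F_log_deriv m a k x i : (1 <= i <= 2 * m)%nat -> x i <> 0 ->
  exists L, derivable_pt_lim (fun t => F m a k (upd x i t)) (x i) L /\
            x i * L = ratioF m k x * logF a k x i.
Proof.
  intros Hi Hx.
  set (C := prod_btw (fun j => upd x i 1 (2 * j)%nat) k m /
            prod_btw (fun j => upd x i 1 (2 * j - 1)%nat) k m).
  set (e := occurrences (fun j => 2 * j)%nat i k m).
  set (f := occurrences (fun j => 2 * j - 1)%nat i k m).
  assert (Hratio : forall t, ratioF m k (upd x i t) = C * t ^ e / t ^ f).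
  { intros t. unfold ratioF, C, e, f.
    rewrite (prod_btw_upd x i t (fun j => 2 * j - 1)%nat),
            (prod_btw_upd x i t (fun j => 2 * j)%nat).
    unfold Rdiv. rewrite !Rinv_mult. ring. }
  destruct (log_deriv_affine_monomial (fun t => F m a k (upd x i t)) (v a (2 * k) (upd x i 0))
     (if Nat.leb i (2 * k) then a i else 0) C e f (x i)) as [L [HL HxL]]; auto.
  { intros t. rewrite F_ratio, Hratio, v_upd by lia. unfold Rdiv.
    destruct (Nat.leb i (2 * k)); ring. }
  exists L. split; auto.
  rewrite HxL, <- Hratio, !upd_same, F_ratio. unfold logF, e, f.
  rewrite occurrences_odd, occurrences_even. nat_cases; simpl INR; ring.
Qed.

Definition fam_scale (m lam k : nat) (x : nat -> R) : R :=
  if Nat.ltb k lam then J (S k) x else if Nat.eqb k lam then 1 else ratioF m k x.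

Lemma fam_log_deriv m a lam k x i : (1 <= i <= 2 * m)%nat -> x i <> 0 ->
  exists L, derivable_pt_lim (fun t => fam m a lam k (upd x i t)) (x i) L /\
            x i * L = fam_scale m lam k x * log_dir a lam k x i.
Proof.
  intros Hi Hx. unfold fam, fam_scale, log_dir.
  destruct (Nat.ltb k lam); [apply J_log_deriv; auto; lia|].
  destruct (Nat.eqb k lam); [|apply F_log_deriv; auto].
  rewrite Rmult_1_l. apply H_log_deriv; auto.
Qed.

Lemma fam_grad_exists m a lam k x :
  torus (2 * m) x -> exists g, is_grad (2 * m) (fam m a lam k) x g.
Proof.
  intros Ht. exists (fun i => fam_scale m lam k x * log_dir a lam k x i / x i).
  intros i Hi. destruct (fam_log_deriv m a lam k x i Hi (Ht i Hi)) as [L [HL HxL]].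
  replace (fam_scale m lam k x * log_dir a lam k x i / x i) with L; auto.
  rewrite <- HxL. field. apply Ht; auto.
Qed.

Lemma fam_grad_eq m a lam k x g : torus (2 * m) x -> is_grad (2 * m) (fam m a lam k) x g ->
  forall i, (1 <= i <= 2 * m)%nat -> x i * g i = fam_scale m lam k x * log_dir a lam k x i.
Proof.
  intros Ht Hg i Hi. destruct (fam_log_deriv m a lam k x i Hi (Ht i Hi)) as [L [HL HxL]].
  rewrite (uniqueness_limite _ _ _ _ (Hg i Hi) HL). exact HxL.
Qed.

Lemma fam_involution m a l lam k1 k2 x g1 g2 :
  (forall i, (1 <= i <= l)%nat -> a i = 0) -> (2 * lam <= l)%nat ->
  (k1 < m)%nat -> (k2 < m)%nat -> torus (2 * m) x ->
  is_grad (2 * m) (fam m a lam k1) x g1 -> is_grad (2 * m) (fam m a lam k2) x g2 ->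
  bracket (2 * m) x g1 g2 = 0.
Proof.
  intros Hz Hl Hk1 Hk2 Ht G1 G2.
  rewrite bracket_skew, (skew_ext _ _ _
    (fun i => fam_scale m lam k1 x * log_dir a lam k1 x i)
    (fun i => fam_scale m lam k2 x * log_dir a lam k2 x i)).
  - rewrite skew_scal, (skew_log_dir m l lam a x); auto. ring.
  - intros; eapply fam_grad_eq; eauto.
  - intros; eapply fam_grad_eq; eauto.
Qed.

Lemma prod_btw_neq0 g lo hi :
  (forall j, (lo < j <= hi)%nat -> g j <> 0) -> prod_btw g lo hi <> 0.
Proof.
  induction hi as [|hi IH]; intros Hg; cbn [prod_btw]; [lra|].
  apply Rmult_integral_contrapositive_currified; [apply IH; intros; apply Hg; lia|].
  destruct (Nat.ltb_spec lo (S hi)); [apply Hg; lia | lra].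
Qed.

Lemma fam_scale_neq0 m lam k x : torus (2 * m) x -> (k < m)%nat -> fam_scale m lam k x <> 0.
Proof.
  intros Ht Hk. unfold fam_scale, J, ratioF.
  destruct (Nat.ltb k lam); [|destruct (Nat.eqb k lam); [lra|]];
    apply Rmult_integral_contrapositive_currified;
    try apply Rinv_neq_0_compat; apply prod_btw_neq0; intros; apply Ht; lia.
Qed.

(* For q = lam the probe is 2 lam + 2 rather than 2 lam + 1, so that every probe p exceeds l
   and v_p depends on x_(l+1). *)
Definition probe (lam q : nat) : nat := if Nat.eqb q lam then (2 * lam + 2)%nat else S (2 * q).

Definition indicator (b : bool) : R := if b then 1 else 0.

Lemma sumto_log_dir_odd a x l lam k j :
  (forall i, (1 <= i <= l)%nat -> a i = 0) -> (2 * lam <= l)%nat -> (j < lam)%nat ->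
  sumto (log_dir a lam k x) (S (2 * j)) = indicator (Nat.leb j k && Nat.ltb k lam).
Proof.
  intros Hz Hl Hj. unfold log_dir, indicator.
  destruct (Nat.ltb_spec k lam); [rewrite sumto_alt_sign; nat_cases|].
  rewrite Bool.andb_false_r.
  destruct (Nat.eqb k lam); [rewrite sumto_logH | rewrite sumto_logF; nat_cases];
    apply (v_vanish a x l); auto; lia.
Qed.

Lemma sumto_log_dir_probe a x lam k q : (lam <= q)%nat ->
  sumto (log_dir a lam k x) (probe lam q) =
  v a (probe lam q) x * indicator (Nat.eqb k lam || Nat.ltb q k).
Proof.
  intros Hq. unfold log_dir, probe, indicator.
  destruct (Nat.ltb_spec k lam); [rewrite sumto_alt_sign; nat_cases; ring|].
  destruct (Nat.eqb_spec k lam); [rewrite sumto_logH; nat_cases; ring|].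
  rewrite sumto_logF. nat_cases; ring.
Qed.

Definition sum_below (m : nat) (P : nat -> bool) (d : nat -> R) : R :=
  sumto (fun k => d (k - 1)%nat * indicator (P (k - 1)%nat)) m.

Lemma sum_below_false m P d : (forall k, (k < m)%nat -> P k = false) -> sum_below m P d = 0.
Proof.
  intros HP. unfold sum_below. rewrite <- (sumto_zero m). apply sumto_ext; intros k Hk.
  rewrite HP by lia. unfold indicator. ring.
Qed.

Lemma sum_below_add_point m P Q d j : (j < m)%nat -> Q j = false ->
  (forall k, (k < m)%nat -> P k = (Q k || Nat.eqb k j)%bool) ->
  sum_below m P d = sum_below m Q d + d j.
Proof.
  intros Hj HQj HPQ. unfold sum_below.
  rewrite (sumto_ext _ (fun k => d (k - 1)%nat * indicator (Q (k - 1)%nat)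
                                 + (if Nat.eqb k (S j) then d j else 0))).
  - rewrite sumto_plus. f_equal. clear HPQ. induction m as [|m IH]; [lia|].
    rewrite sumto_S. destruct (Nat.eqb_spec (S m) (S j)) as [E|E].
    + injection E as ->. rewrite (sumto_ext _ (fun _ => 0)), sumto_zero; [ring|].
      intros k Hk. nat_cases.
    + rewrite IH by lia. ring.
  - intros k Hk. rewrite HPQ by lia. unfold indicator.
    destruct (Q (k - 1)%nat) eqn:Hq; nat_cases;
      try (replace (k - 1)%nat with j in * by lia); try congruence; ring.
Qed.

Lemma sum_below_tails_zero m d lo hi : (hi <= m)%nat ->
  (forall j, (lo <= j < hi)%nat -> sum_below m (fun k => Nat.leb j k && Nat.ltb k hi)%bool d = 0) ->
  forall k, (lo <= k < hi)%nat -> d k = 0.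
Proof.
  intros Hhi Htail k Hk.
  assert (Hsplit : sum_below m (fun k' => Nat.leb k k' && Nat.ltb k' hi)%bool d =
                   sum_below m (fun k' => Nat.leb (S k) k' && Nat.ltb k' hi)%bool d + d k)
    by (apply sum_below_add_point; [lia | nat_cases | intros; nat_cases]).
  assert (Hnext : sum_below m (fun k' => Nat.leb (S k) k' && Nat.ltb k' hi)%bool d = 0).
  { destruct (Nat.ltb_spec (S k) hi).
    - apply Htail. lia.
    - apply sum_below_false. intros; nat_cases. }
  rewrite Htail in Hsplit by lia. lra.
Qed.

Lemma fam_combination_prefix m a lam x gs c p :
  torus (2 * m) x -> (forall k, (k < m)%nat -> is_grad (2 * m) (fam m a lam k) x (gs k)) ->
  (forall i, (1 <= i <= 2 * m)%nat -> sumto (fun k => c (k - 1)%nat * gs (k - 1)%nat i) m = 0) ->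
  (p <= 2 * m)%nat ->
  sumto (fun k => c (k - 1)%nat * fam_scale m lam (k - 1) x
                  * sumto (log_dir a lam (k - 1) x) p) m = 0.
Proof.
  intros Ht Hg Hc Hp.
  transitivity (sumto (fun i => x i * sumto (fun k => c (k - 1)%nat * gs (k - 1)%nat i) m) p).
  - rewrite (sumto_ext (fun i => x i * sumto (fun k => c (k - 1)%nat * gs (k - 1)%nat i) m)
      (fun i => sumto (fun k => c (k - 1)%nat *
                                 (fam_scale m lam (k - 1) x * log_dir a lam (k - 1) x i)) m)).
    + rewrite sumto_swap. apply sumto_ext; intros k Hk.
      rewrite <- sumto_scal. apply sumto_ext; intros; ring.
    + intros i Hi. rewrite <- sumto_scal. apply sumto_ext; intros k Hk.
      rewrite <- (fam_grad_eq m a lam (k - 1) x (gs (k - 1)%nat)); auto; [ring | apply Hg | ]; lia.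
  - rewrite <- (sumto_zero p). apply sumto_ext; intros i Hi. rewrite Hc by lia. ring.
Qed.

(* Prefix sums of [sum_k c_k grad f_k = 0] at the odd positions below 2 lam and at the probes
   form a triangular system. *)
Lemma fam_lin_indep m a l lam x gs :
  (forall i, (1 <= i <= l)%nat -> a i = 0) -> (2 * lam <= l)%nat -> (lam < m)%nat ->
  torus (2 * m) x -> (forall q, (lam <= q < m)%nat -> v a (probe lam q) x <> 0) ->
  (forall k, (k < m)%nat -> is_grad (2 * m) (fam m a lam k) x (gs k)) ->
  lin_indep (2 * m) m gs.
Proof.
  intros Hz Hl Hlm Ht Hv Hg c Hc.
  set (d := fun k => c k * fam_scale m lam k x).
  assert (Hprefix : forall p, (p <= 2 * m)%nat ->
            sumto (fun k => d (k - 1)%nat * sumto (log_dir a lam (k - 1) x) p) m = 0)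
    by (intros; apply fam_combination_prefix with gs; auto).
  assert (Hlow : forall j, (0 <= j < lam)%nat ->
            sum_below m (fun k => Nat.leb j k && Nat.ltb k lam)%bool d = 0).
  { intros j Hj. rewrite <- (Hprefix (S (2 * j))) by lia. apply sumto_ext; intros k _.
    rewrite (sumto_log_dir_odd a x l) by (auto; lia). reflexivity. }
  assert (Hhigh : forall q, (lam <= q < m)%nat ->
            sum_below m (fun k => Nat.eqb k lam || Nat.ltb q k)%bool d = 0).
  { intros q Hq. apply (Rmult_eq_reg_l (v a (probe lam q) x)); [|apply Hv; lia].
    rewrite Rmult_0_r, <- (Hprefix (probe lam q)) by (unfold probe; nat_cases).
    unfold sum_below. rewrite <- sumto_scal. apply sumto_ext; intros k _.
    rewrite sumto_log_dir_probe by lia. ring. }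
  assert (Hsplit : forall q, (lam <= q < m)%nat ->
            sum_below m (fun k => Nat.eqb k lam || Nat.ltb q k)%bool d =
            sum_below m (fun k => Nat.leb (S q) k && Nat.ltb k m)%bool d + d lam)
    by (intros; apply sum_below_add_point; [lia | nat_cases | intros; nat_cases]).
  assert (Hd_lam : d lam = 0).
  { rewrite <- (Hhigh (m - 1)%nat), Hsplit by lia.
    rewrite sum_below_false; [ring | intros; nat_cases]. }
  assert (Hd : forall k, (k < m)%nat -> d k = 0).
  { intros k Hk. destruct (lt_eq_lt_dec k lam) as [[Hlt | ->] | Hgt]; auto.
    - apply (sum_below_tails_zero m d 0 lam); auto; lia.
    - apply (sum_below_tails_zero m d (S lam) m); [lia | | lia].
      intros j Hj. rewrite <- (Hhigh (j - 1)%nat), Hsplit, Hd_lam by lia.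
      replace (S (j - 1)) with j by lia. ring. }
  intros k Hk. specialize (Hd k Hk). unfold d in Hd.
  apply Rmult_integral in Hd as [Hck | Hs]; auto.
  exfalso. exact (fam_scale_neq0 m lam k x Ht Hk Hs).
Qed.

Definition generic_point (m : nat) (a : nat -> R) (lam : nat) (x : nat -> R) : Prop :=
  torus (2 * m) x /\ forall q, (lam <= q < m)%nat -> v a (probe lam q) x <> 0.

Lemma close_mono n eps eps' x y : eps <= eps' -> close n eps x y -> close n eps' x y.
Proof. intros He Hc i Hi. specialize (Hc i Hi). lra. Qed.

Lemma close_finite_conj n x N (P : nat -> (nat -> R) -> Prop) :
  (forall k, (k < N)%nat -> exists eps, 0 < eps /\ forall y, close n eps x y -> P k y) ->
  exists eps, 0 < eps /\ forall y, close n eps x y -> forall k, (k < N)%nat -> P k y.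
Proof.
  induction N as [|N IH]; intros HP; [exists 1; split; [lra | intros; lia]|].
  destruct IH as [e1 [He1 H1]]; [intros; apply HP; lia|].
  destruct (HP N) as [e2 [He2 H2]]; [lia|].
  exists (Rmin e1 e2). split; [apply Rmin_pos; auto|].
  intros y Hy k Hk. assert (Hk' : (k < N \/ k = N)%nat) by lia. destruct Hk' as [Hk' | ->].
  - apply H1; auto. eapply close_mono; [apply Rmin_l | exact Hy].
  - apply H2. eapply close_mono; [apply Rmin_r | exact Hy].
Qed.

Lemma nonzero_persists n (f : (nat -> R) -> R) C x : 0 <= C ->
  (forall eps y, close n eps x y -> Rabs (f y - f x) <= C * eps) -> f x <> 0 ->
  exists eps, 0 < eps /\ forall y, close n eps x y -> f y <> 0.
Proof.
  intros HC Hlip Hx. pose proof (Rabs_pos_lt _ Hx) as Hpos.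
  exists (Rabs (f x) / (C + 1)). split; [apply Rdiv_lt_0_compat; lra|].
  intros y Hy Hy0. specialize (Hlip _ _ Hy). rewrite Hy0, Rminus_0_l, Rabs_Ropp in Hlip.
  replace (C * (Rabs (f x) / (C + 1))) with (Rabs (f x) - Rabs (f x) / (C + 1)) in Hlip
    by (field; lra).
  assert (0 < Rabs (f x) / (C + 1)) by (apply Rdiv_lt_0_compat; lra). lra.
Qed.

Lemma sumto_abs_nonneg a p : 0 <= sumto (fun i => Rabs (a i)) p.
Proof.
  induction p as [|p IH]; simpl; [lra|]. pose proof (Rabs_pos (a (S p))). lra.
Qed.

Lemma v_lipschitz n a eps x y p : close n eps x y -> (p <= n)%nat ->
  Rabs (v a p y - v a p x) <= sumto (fun i => Rabs (a i)) p * eps.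
Proof.
  intros Hc. induction p as [|p IH]; intros Hp.
  - unfold v. simpl. rewrite Rminus_0_r, Rabs_R0. lra.
  - rewrite !v_S, sumto_S.
    replace (v a p y + a (S p) * y (S p) - (v a p x + a (S p) * x (S p)))
      with ((v a p y - v a p x) + a (S p) * (y (S p) - x (S p))) by ring.
    eapply Rle_trans; [apply Rabs_triang|]. rewrite Rabs_mult.
    specialize (IH ltac:(lia)). specialize (Hc (S p) ltac:(lia)).
    pose proof (Rabs_pos (a (S p))).
    assert (Rabs (a (S p)) * Rabs (y (S p) - x (S p)) <= Rabs (a (S p)) * eps)
      by (apply Rmult_le_compat_l; lra).
    lra.
Qed.

Lemma probe_le m lam q : (lam <= q < m)%nat -> (probe lam q <= 2 * m)%nat.
Proof. intros Hq. unfold probe. nat_cases. Qed.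

Lemma generic_point_open m a lam : openR (2 * m) (generic_point m a lam).
Proof.
  intros x [Ht Hv].
  destruct (close_finite_conj (2 * m) x (2 * m) (fun k y => y (S k) <> 0)) as [e1 [He1 H1]].
  { intros k Hk. apply (nonzero_persists (2 * m) (fun y => y (S k)) 1); [lra | | apply Ht; lia].
    intros eps y Hy. specialize (Hy (S k) ltac:(lia)). lra. }
  destruct (close_finite_conj (2 * m) x m
              (fun q y => (lam <= q)%nat -> v a (probe lam q) y <> 0)) as [e2 [He2 H2]].
  { intros q Hq. destruct (le_lt_dec lam q) as [Hlq | Hlq].
    - destruct (nonzero_persists (2 * m) (v a (probe lam q))
                  (sumto (fun i => Rabs (a i)) (probe lam q)) x) as [e [He Hy]];
        [apply sumto_abs_nonneg | | apply Hv; lia |].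
      + intros eps y Hc. apply (v_lipschitz (2 * m)); auto. apply probe_le. lia.
      + exists e. split; auto.
    - exists 1. split; [lra | intros; lia]. }
  exists (Rmin e1 e2). split; [apply Rmin_pos; auto|]. intros y Hy. split.
  - intros i Hi. replace i with (S (i - 1)) by lia.
    apply H1; [eapply close_mono; [apply Rmin_l | exact Hy] | lia].
  - intros q Hq. apply H2; [eapply close_mono; [apply Rmin_r | exact Hy] | lia | lia].
Qed.

Lemma avoid_finite (b : nat -> R) N p q :
  p < q -> exists t, p < t < q /\ forall k, (k < N)%nat -> t <> b k.
Proof.
  intros Hpq.
  assert (Hsub : exists p' q', p <= p' < q' /\ q' <= q /\
            forall k, (k < N)%nat -> forall t, p' < t < q' -> t <> b k).
  { induction N as [|N IH]; [exists p, q; repeat split; try lra; intros; lia|].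
    destruct IH as [p' [q' [H1 [H2 H3]]]].
    exists p', (if Rle_dec (b N) p' then q' else Rmin q' (b N)).
    destruct (Rle_dec (b N) p') as [Hb | Hb].
    - repeat split; try lra. intros k Hk t Ht.
      destruct (Nat.eq_dec k N) as [-> | Hne]; [lra | apply H3; auto; lia].
    - pose proof (Rmin_l q' (b N)). pose proof (Rmin_r q' (b N)).
      assert (p' < Rmin q' (b N)) by (apply Rmin_glb_lt; lra).
      repeat split; try lra. intros k Hk t Ht.
      destruct (Nat.eq_dec k N) as [-> | Hne]; [lra | apply H3; [lia | lra]]. }
  destruct Hsub as [p' [q' [H1 [H2 H3]]]].
  exists ((p' + q') / 2). split; [lra|]. intros k Hk. apply H3; auto. lra.
Qed.

Lemma nonzero_coords_dense n x eps : 0 < eps -> exists y, (forall i, y i <> 0) /\ close n eps x y.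
Proof.
  intros Heps. exists (fun i => if Req_EM_T (x i) 0 then eps / 2 else x i). split.
  - intros i. destruct (Req_EM_T (x i) 0); [lra | auto].
  - intros i _. destruct (Req_EM_T (x i) 0) as [-> | _].
    + rewrite Rminus_0_r, Rabs_pos_eq; lra.
    + rewrite Rminus_diag, Rabs_R0. lra.
Qed.

(* Moving x_(l+1) changes every v_(probe q) affinely with slope a_(l+1) <> 0, so only finitely
   many values of x_(l+1) are bad. *)
Lemma generic_point_dense m a l lam : a (S l) <> 0 -> (l <= 2 * lam + 1)%nat ->
  denseR (2 * m) (generic_point m a lam).
Proof.
  intros Ha Hl x eps Heps.
  destruct (nonzero_coords_dense (2 * m) x eps Heps) as [y [Hy Hclose]].
  set (b := fun k => match k with
                     | O => 0
                     | S q => - v a (probe lam q) (upd y (S l) 0) / a (S l)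
                     end).
  destruct (avoid_finite b (S m) (x (S l) - eps) (x (S l) + eps)) as [t [Ht Hb]]; [lra|].
  exists (upd y (S l) t). split; [split|].
  - intros i Hi. unfold upd. destruct (Nat.eqb i (S l)); [|apply Hy].
    intro E. apply (Hb 0%nat); [lia | exact E].
  - intros q Hq. rewrite v_upd by lia.
    destruct (Nat.leb_spec (S l) (probe lam q)) as [_ | Hlt];
      [| exfalso; unfold probe in Hlt; destruct (Nat.eqb_spec q lam); lia].
    intro E. apply (Hb (S q)); [lia|]. cbn [b].
    replace (v a (probe lam q) (upd y (S l) 0)) with (- (a (S l) * t)) by lra.
    field. exact Ha.
  - intros i Hi. unfold upd. destruct (Nat.eqb_spec i (S l)) as [-> | _]; [|apply Hclose; auto].
    apply Rabs_def1; lra.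
Qed.

Theorem theorem2p3 (m : nat) (a : nat -> R) (l : nat) :
  (1 <= m)%nat ->
  (l < 2 * m)%nat ->
  a (S l) <> 0 ->
  (forall i, (1 <= i <= l)%nat -> a i = 0) ->
  let n := (2 * m)%nat in
  let lam := Nat.div l 2 in
  (forall k, (k < m)%nat -> forall x, torus n x ->
      exists g, is_grad n (fam m a lam k) x g) /\
  (forall k1 k2, (k1 < m)%nat -> (k2 < m)%nat -> forall x, torus n x ->
      forall g1 g2, is_grad n (fam m a lam k1) x g1 -> is_grad n (fam m a lam k2) x g2 ->
      bracket n x g1 g2 = 0) /\
  (exists U : (nat -> R) -> Prop,
      openR n U /\ denseR n U /\ (forall x, U x -> torus n x) /\
      forall x, U x -> forall gs : nat -> nat -> R,
        (forall k, (k < m)%nat -> is_grad n (fam m a lam k) x (gs k)) ->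
        lin_indep n m gs).
Proof.
  intros Hm Hl Ha Hz. cbv zeta.
  pose proof (Nat.div_mod l 2 ltac:(lia)) as Hdiv.
  pose proof (Nat.mod_upper_bound l 2 ltac:(lia)) as Hmod.
  set (lam := (l / 2)%nat) in *.
  assert (Hlam : (2 * lam <= l <= 2 * lam + 1)%nat) by lia.
  split; [|split].
  - intros k _ x Ht. exact (fam_grad_exists m a lam k x Ht).
  - intros k1 k2 Hk1 Hk2 x Ht g1 g2 G1 G2. apply (fam_involution m a l lam k1 k2 x); auto; lia.
  - exists (generic_point m a lam). split; [|split; [|split]].
    + apply generic_point_open.
    + apply (generic_point_dense m a l lam); auto; lia.
    + intros x [Ht _]. exact Ht.
    + intros x [Ht Hv] gs Hgs. apply (fam_lin_indep m a l lam x); auto; lia.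
Qed.
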